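(* Let $d,p\ge1$, let $\eta:\mathbb R^d\to\mathbb R$ be measurable, let $P_1,\dots,P_d$ be probability distributions on $\mathbb R$, let $\Theta\subset\mathbb R^p$ be compact and $(C_\theta)_{\theta\in\Theta}$ a family of $d$-dimensional copulas; let $P_\theta$ be the distribution on $\mathbb R^d$ with marginals $P_1,\dots,P_d$ and copula $C_\theta$, and $G_\theta$ the CDF of $\eta(\mathbf X)$ for $\mathbf X\sim P_\theta$. For a CDF $G$ let $G^{-1}(\alpha)=\inf\{y:G(y)\ge\alpha\}$. Fix $\alpha\in(0,1)$ and assume: (A2) for every $\theta\in\Theta$, $G_\theta$ is continuous; (A3) for every $\theta\in\Theta$, $G_\theta$ is strictly increasing, and there is a function $\underline{\epsilon}_\Theta:(0,\infty)\to(0,\infty)$ with $\min\big(G_\theta(y_\theta+\delta)-G_\theta(y_\theta),\,G_\theta(y_\theta)-G_\theta(y_\theta-\delta)\big)\ge\underline{\epsilon}_\Theta(\delta)$ for all $\theta\in\Theta$, $\delta>0$, where $y_\theta=G_\theta^{-1}(\alpha)$. Let $(\Theta_{K_n})_{n\ge1}$ be finite subsets of $\Theta$ of cardinality $K_n\le K n^\beta$ for some constants $K,\beta>0$. For each $n$ and $\theta\in\Theta_{K_n}$ let $\mathbf X_1,\dots,\mathbf X_n$ be i.i.d. with law $P_\theta$ (all on a common probability space), $Y_i=\eta(\mathbf X_i)$, $\widehat G_\theta(y)=\frac1n\sum_{i=1}^n\mathbf 1_{Y_i\le y}$ and $\widehat G_\theta^{-1}(\alpha)=\inf\{y:\widehat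 G_\theta(y)\ge\alpha\}$. Then for every $\epsilon>0$, $$\mathbb P\Big(\sup_{\theta\in\Theta_{K_n}}\big|\widehat G_\theta^{-1}(\alpha)-G_\theta^{-1}(\alpha)\big|>\epsilon\Big)\xrightarrow[n\to\infty]{}0.$$
   Context: A $d$-dimensional copula is a CDF on $[0,1]^d$ with uniform marginals; $P_\theta$ has joint CDF $C_\theta(F_1(x_1),\dots,F_d(x_d))$ with $F_j$ the CDF of $P_j$. *)

From HB Require Import structures.
From mathcomp Require Import all_boot all_order all_algebra.
From mathcomp Require Import all_classical all_reals all_analysis.
Set Implicit Arguments. Unset Strict Implicit. Unset Printing Implicit Defensive.
Import Order.TTheory GRing.Theory Num.Theory.
Import numFieldNormedType.Exports.
Local Open Scope classical_set_scope.
Local Open Scope ring_scope.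

(* R^d is represented by d.-tuple R, with the product (= Borel) sigma-algebra
   provided by MathComp-Analysis (generated by the coordinate maps). *)

Definition orthant (R : realType) (d : nat) (u : d.-tuple R) : set (d.-tuple R) :=
  [set x | forall j : 'I_d, tnth x j <= tnth u j].

Definition cdf1 (R : realType) (mu : probability R R) (x : R) : R :=
  fine (mu `]-oo, x]%classic).

Definition is_copula (R : realType) (d : nat) (C : d.-tuple R -> R) : Prop :=
  exists mu : probability (d.-tuple R) R,
    mu [set x | forall j : 'I_d, 0 <= tnth x j <= 1] = 1%E /\
    (forall (j : 'I_d) (t : R), 0 <= t <= 1 ->
        mu [set x | tnth x j <= t] = t%:E) /\
    (forall u : d.-tuple R, (forall j : 'I_d, 0 <= tnth u j <= 1) ->
        C u = fine (mu (orthant u))).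

Definition ginv (R : realType) (G : R -> R) (a : R) : R :=
  inf [set y | a <= G y].

Definition has_law (dO : measure_display) (O : measurableType dO) (R : realType)
  (P : probability O R) (d : nat) (X : O -> d.-tuple R)
  (mu : probability (d.-tuple R) R) : Prop :=
  measurable_fun setT X /\
  forall B : set (d.-tuple R), measurable B -> P (X @^-1` B) = mu B.

Definition mutually_independent (dO : measure_display) (O : measurableType dO)
  (R : realType) (P : probability O R) (d n : nat) (X : nat -> O -> d.-tuple R) :
  Prop :=
  forall B : nat -> set (d.-tuple R), (forall i, measurable (B i)) ->
    P (\bigcap_(i in [set i | (i < n)%N]) (X i @^-1` B i)) =
    (\prod_(i < n) P (X i @^-1` B i))%E.

Definition ecdf (R : realType) (d n : nat) (eta : d.-tuple R -> R)
  (X : nat -> d.-tuple R) (y : R) : R :=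
  n%:R^-1 * \sum_(i < n) (nat_of_bool (eta (X i) <= y)%R)%:R.

Definition pushcdf (R : realType) (d : nat) (mu : probability (d.-tuple R) R)
  (eta : d.-tuple R -> R) (y : R) : R :=
  fine (mu (eta @^-1` `]-oo, y]%classic)).

From HB Require Import structures.
From mathcomp Require Import all_boot all_order all_algebra.
From mathcomp Require Import all_classical all_reals all_analysis.
From mathcomp Require Import ring lra measurable_realfun.
Import Order.TTheory GRing.Theory Num.Theory.
Import numFieldNormedType.Exports.
Local Open Scope classical_set_scope.
Local Open Scope ring_scope.

(* Let y = G^{-1}(alpha) and let F_n be the empirical CDF. The empirical
   quantile misses y by more than eps only if F_n(y + eps) < alpha or
   F_n(y - eps) >= alpha, i.e. only if fewer than alpha n sample points fall
   below y + eps or at least alpha n fall below y - eps. Continuity gives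
   G(y) = alpha, so by (A3) the success probabilities G(y + eps) and
   G(y - eps) of these binomial counts stay a margin e away from alpha,
   uniformly in theta, and a Chernoff bound gives each event probability at
   most exp(-n e^2 / 8). A union bound over the at most K n^beta parameters
   leaves 2 K n^beta exp(-n e^2 / 8), which tends to 0. *)

Lemma exists_right_lt {R : realType} {F : R -> R} {z a : R} :
  {for z, continuous F} -> F z < a -> exists2 t, z < t & F t < a.
Proof.
move=> Fc Fz; have [t [zt Ft]] := filter_ex (filterI (nbhs_right_gt z)
  (cvgr_lt _ (cvg_at_right_filter Fc) _ Fz)).
by exists t.
Qed.

Lemma exists_left_gt {R : realType} {F : R -> R} {z a : R} :
  {for z, continuous F} -> a < F z -> exists2 t, t < z & a < F t.
Proof.
move=> Fc Fz; have [t [tz Ft]] := filter_ex (filterI (nbhs_left_lt z)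
  (cvgr_gt _ (cvg_at_left_filter Fc) _ Fz)).
by exists t.
Qed.

Section generalized_inverse.
Context {R : realType} (F : R -> R) (alpha : R).
Hypothesis F_nd : {homo F : x y / x <= y}.

Lemma ginv_le_iff : (exists y, F y < alpha) -> (exists y, alpha <= F y) ->
  (forall z, F z < alpha -> exists2 z', z < z' & F z' < alpha) ->
  forall z, ginv F alpha <= z <-> alpha <= F z.
Proof.
move=> [y0 Fy0] [y1 Fy1] F_open z.
have lb_level x : F x < alpha -> lbound [set y | alpha <= F y] x.
  move=> Fx y /= Fy; rewrite leNgt; apply/negP => yx.
  by have := le_lt_trans (le_trans Fy (F_nd _ _ (ltW yx))) Fx; rewrite ltxx.
split => [ginv_z|Fz]; last by apply: ge_inf; [exists y0; exact: lb_level|].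
rewrite leNgt; apply/negP => /F_open[z' zz' Fz'].
have := lt_le_trans zz' (lb_le_inf (ex_intro _ y1 Fy1) (lb_level _ Fz')).
by rewrite ltNge ginv_z.
Qed.

Lemma continuous_ginvK : (exists y, F y < alpha) -> (exists y, alpha <= F y) ->
  continuous F -> F (ginv F alpha) = alpha.
Proof.
move=> lt_alpha ge_alpha F_cont.
have ginv_le := ginv_le_iff lt_alpha ge_alpha
  (fun z => exists_right_lt (F_cont z)).
apply/eqP; rewrite eq_le (ginv_le _).1 // andbT leNgt; apply/negP.
move=> /(exists_left_gt (F_cont _))[t t_lt /ltW /ginv_le].
by rewrite leNgt t_lt.
Qed.

End generalized_inverse.

(* The strict deviation to the left is not a single threshold event for F,
   hence the countable union. *)
Lemma ginv_far_iff {R : realType} (F : R -> R) (alpha y eps : R) :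
  (forall z, ginv F alpha <= z <-> alpha <= F z) ->
  eps < `|ginv F alpha - y| <->
  F (y + eps) < alpha \/ exists k : nat, alpha <= F (y - eps - k.+1%:R^-1).
Proof.
move=> ginv_le; rewrite ltr_normr; split.
- case/orP => [far_right|far_left].
    by left; rewrite ltNge; apply/negP => /(ginv_le _).2; lra.
  right; have [k hk] : exists k : nat, ginv F alpha + k.+1%:R^-1 < y - eps.
    by apply: ltr_add_invr; lra.
  by exists k; apply/ginv_le; rewrite lerBrDr ltW.
- case=> [Fr|[k /(ginv_le _).2 Fl]].
    apply/orP; left; rewrite ltNge; apply/negP => near_right.
    have /(ginv_le _).1 : ginv F alpha <= y + eps by lra.
    lra.
  have : 0 < k.+1%:R^-1 :> R by rewrite invr_gt0 ltr0Sn.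
  move: Fl; set u := k.+1%:R^-1 => Fl u0.
  by apply/orP; right; lra.
Qed.

Lemma exists_gap_above {R : realType} (s : seq R) (z : R) :
  exists2 dl, 0 < dl & forall x, x \in s -> z < x -> z + dl <= x.
Proof.
elim: s => [|x s [dl dl0 hdl]]; first by exists 1.
have [zx|xz] := ltP z x.
  exists (Num.min dl (x - z)); first by rewrite lt_min dl0 subr_gt0.
  move=> t; rewrite inE => /predU1P[->|ts] zt.
    by rewrite -lerBrDl ge_min lexx orbT.
  by apply: le_trans (hdl _ ts zt); rewrite lerD2l ge_min lexx.
exists dl => // t; rewrite inE => /predU1P[->|]; last exact: hdl.
by rewrite ltNge xz.
Qed.

Section empirical_cdf.
Context {R : realType} {d : nat} (n : nat) (eta : d.-tuple R -> R)
  (x : nat -> d.-tuple R).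
Local Notation F := (ecdf n eta x).

Lemma ecdf_nondecreasing : {homo F : y z / y <= z}.
Proof.
move=> y z yz; rewrite /ecdf ler_wpM2l ?invr_ge0 ?ler0n // ler_sum // => i _.
by rewrite ler_nat; case: (eta (x i) <= y) /idP => // /le_trans/(_ yz) ->.
Qed.

Lemma ecdf_eq0 y : (forall i : 'I_n, y < eta (x i)) -> F y = 0.
Proof.
by move=> lt_y; rewrite /ecdf big1 ?mulr0 // => i _; rewrite leNgt lt_y.
Qed.

Lemma ecdf_eq1 y : (0 < n)%N -> (forall i : 'I_n, eta (x i) <= y) -> F y = 1.
Proof.
move=> n_gt0 le_y; rewrite /ecdf (eq_bigr (fun=> 1)) => [|i _]; last first.
  by rewrite le_y.
by rewrite sumr_const card_ord mulVf // pnatr_eq0 -lt0n.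
Qed.

Lemma ecdf_right_step y : exists2 dl, 0 < dl & F (y + dl) = F y.
Proof.
have [dl dl0 gap] := exists_gap_above (codom (eta \o x \o val : 'I_n -> R)) y.
exists (dl / 2); first by rewrite divr_gt0.
rewrite /ecdf; congr (_ * _); apply: eq_bigr => i _; congr (nat_of_bool _)%:R.
have [le_y|lt_y] := leP (eta (x i)) y.
  by apply: (le_trans le_y); rewrite lerDl ltW // divr_gt0.
apply/negbTE; rewrite -ltNge.
by have := gap (eta (x i)) (codom_f (eta \o x \o val) i) lt_y; lra.
Qed.

Lemma ecdf_ginv_le_iff (alpha : R) : (0 < n)%N -> 0 < alpha <= 1 ->
  forall z, ginv F alpha <= z <-> alpha <= F z.
Proof.
move=> n_gt0 /andP[a0 a1]; set M := \sum_(i < n) `|eta (x i)|.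
have le_M (i : 'I_n) : `|eta (x i)| <= M.
  by rewrite /M (bigD1 i) //= lerDl sumr_ge0.
apply: ginv_le_iff; first exact: ecdf_nondecreasing.
- exists (- M - 1); rewrite ecdf_eq0 // => i.
  by have := le_M i; rewrite ler_norml => /andP[] *; lra.
- exists M; rewrite ecdf_eq1 // => i.
  by have := le_M i; rewrite ler_norml => /andP[].
- move=> z Fz; have [dl dl0 Fdl] := ecdf_right_step z.
  by exists (z + dl); rewrite ?ltrDl ?Fdl.
Qed.

End empirical_cdf.

Section pushforward_cdf.
Context {R : realType} {d : nat} (mu : probability (d.-tuple R) R)
  (eta : d.-tuple R -> R) (eta_meas : measurable_fun setT eta).

Let eta_rv : {RV mu >-> R} := mfun_Sub (mem_set eta_meas).

Let pushcdfE : pushcdf mu eta = fine \o cdf eta_rv.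
Proof. by []. Qed.

Lemma pushcdf_nondecreasing : {homo pushcdf mu eta : x y / x <= y}.
Proof.
move=> x y xy; rewrite pushcdfE /=.
by rewrite fine_le ?fin_num_measure ?cdf_nondecreasing.
Qed.

Lemma exists_pushcdf_lt (alpha : R) : 0 < alpha ->
  exists y, pushcdf mu eta y < alpha.
Proof.
move=> a0; have [M [_ ltM]] := cvgr_lt _ (fine_cvg (cvg_cdfNy0 eta_rv)) _ a0.
by exists (M - 1); rewrite pushcdfE; apply: ltM; rewrite ltrBlDr ltrDl.
Qed.

Lemma exists_pushcdf_ge (alpha : R) : alpha < 1 ->
  exists y, alpha <= pushcdf mu eta y.
Proof.
move=> a1; have [M [_ gtM]] := cvgr_gt _ (fine_cvg (cvg_cdfy1 eta_rv)) _ a1.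
by exists (M + 1); rewrite pushcdfE ltW //; apply: gtM; rewrite ltrDl.
Qed.

End pushforward_cdf.

Lemma expR_le_quadratic {R : realType} (t : R) : 0 <= t <= 1 / 2 ->
  expR t <= 1 + t + 2 * t ^+ 2.
Proof.
move=> /andP[t0 t_half].
have quad_gt0 : 0 < 1 + t + 2 * t ^+ 2 by have := sqr_ge0 t; nra.
have : 1 <= expR (- t) * (1 + t + 2 * t ^+ 2).
  apply: le_trans (_ : (1 - t) * (1 + t + 2 * t ^+ 2) <= _).
    have : 0 <= t ^+ 2 * (1 - 2 * t) by rewrite mulr_ge0 ?exprn_ge0 //; lra.
    by nra.
  by rewrite ler_pM2r // expR_ge1Dx.
by rewrite -(ler_pM2l (expR_gt0 t)) mulrA -expRD subrr expR0 !mul1r mulr1.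
Qed.

Lemma sum_expr_card_set {R : pzSemiRingType} (I : finType) (x : R) :
  \sum_(J : {set I}) x ^+ #|J| = (x + 1) ^+ #|I|.
Proof.
rewrite -prodr_const bigA_distr; apply: eq_bigr => J _.
by rewrite -big_mkcond /= prodr_const.
Qed.

Section independent_events.
Context {dO : measure_display} {Omega : measurableType dO} {R : realType}
  (P : probability Omega R) {n : nat} (A : 'I_n -> set Omega).
Hypothesis mA : forall i, measurable (A i).

Definition cap_events (J : {set 'I_n}) : set Omega :=
  \bigcap_(i in [set i | i \in J]) A i.

Definition count_events (w : Omega) : R := \sum_(i < n) \1_(A i) w.

Lemma measurable_cap_events J : measurable (cap_events J).
Proof. by apply: fin_bigcap_measurable => //; exact: finite_finset. Qed.

Lemma measurable_count_events : measurable_fun setT count_events.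
Proof. by apply: measurable_sum => i; exact: measurable_indic. Qed.

Lemma measurable_count_events_ge c : measurable [set w | c <= count_events w].
Proof.
have -> : [set w | c <= count_events w] = count_events @^-1` `[c, +oo[.
  by apply/seteqP; split => w /=; rewrite in_itv /= andbT.
rewrite -[_ @^-1` _]setTI.
by apply: measurable_count_events => //; exact: measurable_itv.
Qed.

Lemma prod_indic_events (J : {set 'I_n}) w :
  \prod_(i in J) \1_(A i) w = \1_(cap_events J) w :> R.
Proof.
have [capJ|ncapJ] := pselect (cap_events J w).
  rewrite indicE mem_set // big1 // => i iJ; rewrite indicE mem_set //.
  exact: capJ.
rewrite indicE memNset //.
have [i iJ nAi] : exists2 i, i \in J & ~ A i w.
  apply: contrapT => hJ; apply: ncapJ => i iJ.
  by apply: contrapT => ?; apply: hJ; exists i.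
by rewrite (bigD1 i) //= indicE memNset // mul0r.
Qed.

Lemma expR_count_events t w : expR (t * count_events w) =
  \sum_(J : {set 'I_n}) (expR t - 1) ^+ #|J| * \1_(cap_events J) w.
Proof.
have expR_indic i : expR (t * \1_(A i) w) = (expR t - 1) * \1_(A i) w + 1.
  rewrite indicE; case: (w \in A i).
    by rewrite !mulr1 subrK.
  by rewrite !mulr0 expR0 add0r.
rewrite mulr_sumr expR_sum (eq_bigr _ (fun i _ => expR_indic i)).
rewrite bigA_distr; apply: eq_bigr => J _.
by rewrite -big_mkcond /= big_split /= prodr_const prod_indic_events.
Qed.

Lemma integral_expR_count_events (t q : R) : 0 <= t ->
  (forall J, P (cap_events J) = (q ^+ #|J|)%:E) ->
  (\int[P]_w (expR (t * count_events w))%:E =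
   (((expR t - 1) * q + 1) ^+ n)%:E)%E.
Proof.
move=> t0 hq; have s0 : 0 <= expR t - 1 by rewrite subr_ge0 -expR0 ler_expR.
under eq_integral => w _ do rewrite expR_count_events -sumEFin.
rewrite ge0_integral_sum //; first last.
- by move=> J w _; rewrite lee_fin mulr_ge0 ?exprn_ge0 // indicE.
- move=> J; apply/measurable_EFinP; apply: measurable_funM => //.
  exact/measurable_indic/measurable_cap_events.
rewrite -[n in RHS]card_ord -sum_expr_card_set -sumEFin.
apply: eq_bigr => J _; under eq_integral => w _ do rewrite EFinM.
rewrite ge0_integralZl_EFin ?exprn_ge0 //; last first.
  exact/measurable_EFinP/measurable_indic/measurable_cap_events.
rewrite integral_indic //; last exact: measurable_cap_events.
by rewrite setIT exprMn EFinM; congr (_ * _)%E; exact: hq.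
Qed.

Lemma markov_count_events (t c : R) : 0 <= t ->
  ((expR (t * c))%:E * P [set w | (c <= count_events w)%R] <=
   \int[P]_w (expR (t * count_events w))%:E)%E.
Proof.
move=> t0; set E := [set w | c <= count_events w].
have mE : measurable E := measurable_count_events_ge c.
have -> : P E = (\int[P]_w (\1_E w)%:E)%E by rewrite integral_indic // setIT.
rewrite -ge0_integralZl_EFin ?expR_ge0 //; last first.
  exact/measurable_EFinP/measurable_indic.
apply: ge0_le_integral => //.
- by apply/measurable_funeM/measurable_EFinP; exact: measurable_indic.
- apply/measurable_EFinP/measurableT_comp => //.
  by apply: measurable_funM => //; exact: measurable_count_events.
move=> w _; rewrite -EFinM lee_fin indicE.
have [Ew|nEw] := pselect (E w); last by rewrite memNset // mulr0 expR_ge0.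
by rewrite mem_set // mulr1 ler_expR ler_wpM2l.
Qed.

(* Chernoff bound with t = e / 4, where expR t - 1 <= t + 2 t^2 makes the
   exponent at most - e^2 / 8. *)
Lemma count_events_tail (q c e : R) :
  0 <= q <= 1 -> 0 < e <= 1 -> q <= c - e ->
  (forall J, P (cap_events J) = (q ^+ #|J|)%:E) ->
  (P [set w | (c * n%:R <= count_events w)%R] <=
   (expR (- (e ^+ 2 / 8)) ^+ n)%:E)%E.
Proof.
move=> /andP[q0 q1] /andP[e0 e1] qce hq.
set t := e / 4; set s := expR t - 1.
have t0 : 0 <= t by rewrite divr_ge0 // ltW.
have s0 : 0 <= s by rewrite subr_ge0 -expR0 ler_expR.
have s_le : s <= t + 2 * t ^+ 2.
  by rewrite lerBlDl addrA expR_le_quadratic // t0 /t; lra.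
have exponent_le : s * q - t * c <= - (e ^+ 2 / 8).
  have := ler_wpM2r q0 s_le; have := ler_wpM2l t0 qce.
  have : 2 * t ^+ 2 * q <= 2 * t ^+ 2.
    by rewrite ler_piMr // mulr_ge0 // exprn_ge0.
  by rewrite /t; nra.
have pow_le : (s * q + 1) ^+ n <= expR (n%:R * (s * q)).
  rewrite expRM_natl lerXn2r ?nnegrE ?addr_ge0 ?mulr_ge0 ?expR_ge0 //.
  by rewrite addrC expR_ge1Dx.
have := markov_count_events _ (c * n%:R) t0.
rewrite (integral_expR_count_events _ _ t0 hq).
set E := [set w | _]; have Efin : P E \is a fin_num.
  by rewrite fin_num_measure //; exact: measurable_count_events_ge.
rewrite -(fineK Efin) -EFinM !lee_fin => bound.
rewrite -expRM_natl -(ler_pM2l (expR_gt0 (t * (c * n%:R)))) -expRD.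
apply: le_trans bound _; apply: le_trans pow_le _; rewrite ler_expR.
by have := ler_wpM2l (ler0n R n) exponent_le; lra.
Qed.

End independent_events.

Lemma count_events_setC {dO : measure_display} {Omega : measurableType dO}
    {R : realType} {n : nat} (A : 'I_n -> set Omega) w :
  count_events (fun i => ~` A i) w = n%:R - count_events A w :> R.
Proof.
have -> : n%:R = \sum_(i < n) 1 :> R by rewrite sumr_const card_ord.
rewrite /count_events -sumrB; apply: eq_bigr => i _; rewrite !indicE.
have [Aiw|nAiw] := pselect (A i w).
  by rewrite memNset ?mem_set ?subrr.
by rewrite mem_set ?memNset ?subr0.
Qed.

Lemma fine_probability_ge0_le1 {d : measure_display} {T : measurableType d}
    {R : realType} (mu : probability T R) (S : set T) :
  measurable S -> 0 <= fine (mu S) <= 1.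
Proof.
move=> mS; rewrite fine_ge0 ?measure_ge0 //=.
by rewrite -lee_fin fineK ?fin_num_measure ?probability_le1.
Qed.

Lemma independent_cap_events {dO : measure_display} {Omega : measurableType dO}
    {R : realType} (P : probability Omega R) {d n : nat}
    (Xs : nat -> Omega -> d.-tuple R) (mu : probability (d.-tuple R) R)
    (S : set (d.-tuple R)) :
  measurable S -> (forall i, (i < n)%N -> has_law P (Xs i) mu) ->
  mutually_independent P n Xs -> forall J : {set 'I_n},
  P (cap_events (fun i : 'I_n => Xs i @^-1` S) J) = (fine (mu S) ^+ #|J|)%:E.
Proof.
move=> mS Xs_law Xs_indep J.
pose B i : set (d.-tuple R) :=
  if insub i is Some k then if k \in J then S else setT else setT.
have -> : cap_events (fun i : 'I_n => Xs i @^-1` S) J =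
    \bigcap_(i in [set i | (i < n)%N]) (Xs i @^-1` B i).
  apply/seteqP; split => w /= capJ.
  - move=> i /= lt_in; rewrite /B; case: insubP => [k _ ki| ] //=.
    by case: ifP => // kJ; have := capJ k kJ; rewrite /= ki.
  - by move=> k /= kJ; have := capJ k (ltn_ord k); rewrite /= /B valK kJ.
rewrite Xs_indep; last first.
  by move=> i; rewrite /B; case: (insub i) => // k; case: (k \in J).
rewrite (eq_bigr (fun k => (if k \in J then fine (mu S) else 1)%:E)).
  by rewrite prodEFin -big_mkcond /= prodr_const.
move=> k _; rewrite /B valK; case: ifP => _; last first.
  by rewrite preimage_setT probability_setT.
by case: (Xs_law k (ltn_ord k)) => _ ->; rewrite // fineK ?fin_num_measure.
Qed.

Section empirical_quantile.
Context {dO : measure_display} {Omega : measurableType dO} {R : realType}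
  (P : probability Omega R) {d : nat} (mu : probability (d.-tuple R) R)
  (eta : d.-tuple R -> R) (eta_meas : measurable_fun setT eta)
  (n : nat) (Xs : nat -> Omega -> d.-tuple R).
Hypothesis n_gt0 : (0 < n)%N.
Hypothesis Xs_law : forall i, (i < n)%N -> has_law P (Xs i) mu.

Local Notation Fn w := (ecdf n eta (fun i => Xs i w)).
Local Notation G := (pushcdf mu eta).

Let sample_in (S : set (d.-tuple R)) : 'I_n -> set Omega :=
  fun i => Xs i @^-1` S.

Let measurable_below z : measurable (eta @^-1` `]-oo, z]).
Proof.
by rewrite -[_ @^-1` _]setTI; apply: eta_meas => //; exact: measurable_itv.
Qed.

Let measurable_sample_in S : measurable S ->
  forall i, measurable (sample_in S i).
Proof.
move=> mS i; rewrite -[sample_in S i]setTI.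
by case: (Xs_law _ (ltn_ord i)) => mXi _; exact: mXi.
Qed.

Lemma ecdf_count_events z w :
  Fn w z = n%:R^-1 * count_events (sample_in (eta @^-1` `]-oo, z])) w.
Proof.
rewrite /ecdf /count_events; congr (_ * _); apply: eq_bigr => i _.
rewrite indicE; have [le_z|gt_z] := boolP (eta (Xs i w) <= z).
  by rewrite mem_set //= in_itv /= le_z.
by rewrite memNset //= /sample_in /= in_itv /= (negbTE gt_z).
Qed.

Lemma measurable_ecdf z : measurable_fun setT (fun w => Fn w z).
Proof.
under eq_fun => w do rewrite ecdf_count_events.
apply: measurable_funM => //; apply: measurable_count_events.
exact: measurable_sample_in (measurable_below z).
Qed.

Lemma quantile_deviation_eq (alpha y eps : R) : 0 < alpha <= 1 ->
  [set w | eps < `|ginv (Fn w) alpha - y|] =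
  [set w | Fn w (y + eps) < alpha] `|`
  \bigcup_k [set w | alpha <= Fn w (y - eps - k.+1%:R^-1)].
Proof.
move=> alpha01.
have far w := ginv_far_iff _ _ y eps (ecdf_ginv_le_iff n eta (Xs^~ w) _
  n_gt0 alpha01).
apply/seteqP; split => w /=.
- by move/(far w) => [lt_alpha|[k ge_alpha]]; [left|right; exists k].
- move=> far_w; apply/(far w).
  by case: far_w => [lt_alpha|[k _ ge_alpha]]; [left|right; exists k].
Qed.

Lemma measurable_quantile_deviation (alpha y eps : R) : 0 < alpha <= 1 ->
  measurable [set w | eps < `|ginv (Fn w) alpha - y|].
Proof.
move=> alpha01; rewrite quantile_deviation_eq //; apply: measurableU.
  rewrite (_ : [set w | _] = (fun w => Fn w (y + eps)) @^-1` `]-oo, alpha[).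
    rewrite -[_ @^-1` _]setTI.
    by apply: measurable_ecdf => //; exact: measurable_itv.
  by apply/seteqP; split => w /=; rewrite in_itv.
apply: bigcup_measurable => k _.
rewrite (_ : [set w | _] =
    (fun w => Fn w (y - eps - k.+1%:R^-1)) @^-1` `[alpha, +oo[).
  rewrite -[_ @^-1` _]setTI.
  by apply: measurable_ecdf => //; exact: measurable_itv.
by apply/seteqP; split => w /=; rewrite in_itv /= andbT.
Qed.

Hypothesis Xs_indep : mutually_independent P n Xs.

Lemma quantile_deviation_le (alpha eps e : R) :
  0 < alpha < 1 -> continuous G -> 0 < e <= 1 ->
  e <= G (ginv G alpha + eps) - G (ginv G alpha) ->
  e <= G (ginv G alpha) - G (ginv G alpha - eps) ->
  (P [set w | (eps < `|ginv (Fn w) alpha - ginv G alpha|)%R] <=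
   (expR (- (e ^+ 2 / 8)) ^+ n *+ 2)%:E)%E.
Proof.
move=> /andP[a0 a1] G_cont e01; set y := ginv G alpha => e_right e_left.
have alpha01 : 0 < alpha <= 1 by rewrite a0 ltW.
have Gy : G y = alpha.
  apply: continuous_ginvK G_cont.
  - exact: pushcdf_nondecreasing.
  - exact: exists_pushcdf_lt.
  - exact: exists_pushcdf_ge.
pose below z := eta @^-1` `]-oo, z].
have mbelowC z : measurable (~` below z) := measurableC (measurable_below z).
pose U := [set w | (1 - alpha) * n%:R <=
                   count_events (sample_in (~` below (y + eps))) w].
pose L := [set w | alpha * n%:R <= count_events (sample_in (below (y - eps))) w].
have mU : measurable U :=
  measurable_count_events_ge _ (measurable_sample_in _ (mbelowC _)) _.
have mL : measurable L :=
  measurable_count_events_ge _ (measurable_sample_in _ (measurable_below _)) _.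
have n0 : (0 : R) < n%:R by rewrite ltr0n.
have deviation_sub : [set w | eps < `|ginv (Fn w) alpha - y|] `<=` U `|` L.
  rewrite quantile_deviation_eq // => w [lt_alpha|[k _ ge_alpha]].
    left; rewrite /U /mkset count_events_setC.
    move: lt_alpha; rewrite /mkset ecdf_count_events mulrC ltr_pdivrMr //.
    lra.
  right; rewrite /L /mkset mulrC -ler_pdivlMl // -ecdf_count_events.
  apply: le_trans ge_alpha (ecdf_nondecreasing _ _ _ _ _ _).
  by rewrite lerBlDr lerDl.
have PU : (P U <= (expR (- (e ^+ 2 / 8)) ^+ n)%:E)%E.
  apply: (count_events_tail _ _ (measurable_sample_in _ (mbelowC _))
    (fine (mu (~` below (y + eps))))).
  + exact: fine_probability_ge0_le1 (mbelowC _).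
  + exact: e01.
  + rewrite probability_setC ?fineB ?fin_num_measure //;
      try exact: measurable_below.
    by rewrite -/(pushcdf mu eta (y + eps)) /=; lra.
  + exact: independent_cap_events (mbelowC _) Xs_law Xs_indep.
have PL : (P L <= (expR (- (e ^+ 2 / 8)) ^+ n)%:E)%E.
  apply: (count_events_tail _ _ (measurable_sample_in _ (measurable_below _))
    (pushcdf mu eta (y - eps))).
  + exact: fine_probability_ge0_le1 (measurable_below _).
  + exact: e01.
  + lra.
  + exact: independent_cap_events (measurable_below _) Xs_law Xs_indep.
apply: (@le_trans _ _ (P (U `|` L))).
  apply: le_measure deviation_sub; rewrite inE; last exact: measurableU.
  exact: measurable_quantile_deviation alpha01.
apply: le_trans (measureU2 _ mU mL) _.
by rewrite mulr2n EFinD; exact: leeD.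
Qed.

End empirical_quantile.

Lemma measure_bigsetU_seq_le {d : measure_display} {T : measurableType d}
    {R : realType} (mu : {measure set T -> \bar R}) {I : eqType} (s : seq I)
    (F : I -> set T) (b : R) :
  (forall i, i \in s -> measurable (F i)) ->
  (forall i, i \in s -> mu (F i) <= b%:E)%E ->
  (mu (\big[setU/set0]_(i <- s) F i) <= (b *+ size s)%:E)%E.
Proof.
elim: s => [|i s IHs] mF Fb; first by rewrite big_nil measure0.
have mFs j : j \in s -> measurable (F j).
  by move=> js; apply: mF; rewrite inE js orbT.
rewrite big_cons; apply: le_trans (measureU2 _ _ _) _.
- by apply: mF; rewrite mem_head.
- by rewrite big_seq_cond; apply: bigsetU_measurable => j /andP[/mFs].
rewrite /= mulrS EFinD leeD ?Fb ?mem_head // IHs // => j js.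
by apply: Fb; rewrite inE js orbT.
Qed.

Lemma measure_cvg0_le {d : measure_display} {T : measurableType d}
    {R : realType} (mu : probability T R) (E : nat -> set T) (b : nat -> R) :
  (\forall n \near \oo, measurable (E n) /\ (mu (E n) <= (b n)%:E)%E) ->
  b n @[n --> \oo] --> 0 -> mu (E n) @[n --> \oo] --> 0%E.
Proof.
move=> E_le b0; apply/fine_cvgP; split.
  by apply: filterS E_le => n [mE _]; rewrite fin_num_measure.
apply: (squeeze_cvgr (f := fun=> 0) _ (cvg_cst _) b0).
apply: filterS E_le => n [mE le_b].
by rewrite fine_ge0 ?measure_ge0 //= -lee_fin fineK ?fin_num_measure.
Qed.

Lemma powR_mul_expR_le {R : realType} (beta a : R) : 0 < beta -> 0 < a ->
  exists C, forall n, (0 < n)%N ->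
    n%:R `^ beta * expR (- a) ^+ n <= C * expR (- (a / 2)) ^+ n.
Proof.
move=> b0 a0; set l := a / (2 * beta).
have l0 : 0 < l by rewrite divr_gt0 // mulr_gt0.
exists (expR (beta * (-1 - ln l))) => n n_gt0.
have n0 : (0 : R) < n%:R by rewrite ltr0n.
rewrite /powR (negbTE (lt0r_neq0 n0)) -!expRM_natl -!expRD ler_expR.
have ln_le : ln (l * n%:R) <= l * n%:R - 1.
  have := @le_ln1Dx _ (l * n%:R - 1); rewrite addrCA subrr addr0; apply.
  have : 0 < l * n%:R by rewrite mulr_gt0.
  lra.
rewrite lnM ?posrE // in ln_le.
have lbn : beta * (l * n%:R) = n%:R * (a / 2).
  by rewrite /l; field; rewrite lt0r_neq0.
have ln_n : ln n%:R <= l * n%:R - 1 - ln l by lra.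
have := ler_wpM2l (ltW b0) ln_n.
have : 0 <= n%:R * (a / 2) by rewrite mulr_ge0 // divr_ge0 // ltW.
rewrite !mulrBr lbn; lra.
Qed.

Lemma cvg_powR_mul_expR {R : realType} (beta a : R) : 0 < beta -> 0 < a ->
  n%:R `^ beta * expR (- a) ^+ n @[n --> \oo] --> (0 : R).
Proof.
move=> b0 a0; have [C le_geo] := powR_mul_expR_le _ _ b0 a0.
apply: (@squeeze_cvgr _ _ _ _ (fun=> 0) (fun n => C * expR (- (a / 2)) ^+ n)).
- exists 1%N => // n /= n_gt0.
  by rewrite le_geo // mulr_ge0 ?powR_ge0 ?exprn_ge0 ?expR_ge0.
- exact: cvg_cst.
- rewrite -(mulr0 C); apply: cvgMr.
  by apply: cvg_expr; rewrite ger0_norm ?expR_ge0 // expR_lt1 oppr_lt0 divr_gt0.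
Qed.

Theorem proposition1 (R : realType) (d p : nat) (hd : (1 <= d)%N) (hp : (1 <= p)%N)
  (eta : d.-tuple R -> R) (eta_meas : measurable_fun setT eta)
  (Pm : 'I_d -> probability R R)
  (Theta : set 'rV[R]_p) (Theta_compact : compact Theta)
  (C : 'rV[R]_p -> d.-tuple R -> R)
  (C_copula : forall th, Theta th -> is_copula (C th))
  (Pth : 'rV[R]_p -> probability (d.-tuple R) R)
  (Pth_cdf : forall th, Theta th -> forall x : d.-tuple R,
      fine (Pth th (orthant x)) = C th [tuple cdf1 (Pm j) (tnth x j) | j < d])
  (alpha : R) (halpha : 0 < alpha < 1)
  (A2 : forall th, Theta th -> continuous (pushcdf (Pth th) eta))
  (A3_incr : forall th, Theta th -> forall x y : R, x < y ->
      pushcdf (Pth th) eta x < pushcdf (Pth th) eta y)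
  (A3_unif : exists epsT : R -> R, forall delta : R, 0 < delta ->
      0 < epsT delta /\
      forall th, Theta th ->
        let G := pushcdf (Pth th) eta in
        let y := ginv G alpha in
        epsT delta <= Num.min (G (y + delta) - G y) (G y - G (y - delta)))
  (ThetaK : nat -> seq 'rV[R]_p)
  (ThetaK_uniq : forall n, uniq (ThetaK n))
  (ThetaK_sub : forall n th, th \in ThetaK n -> Theta th)
  (K beta : R) (hK : 0 < K) (hbeta : 0 < beta)
  (ThetaK_card : forall n, (1 <= n)%N -> (size (ThetaK n))%:R <= K * n%:R `^ beta)
  (dO : measure_display) (Omega : measurableType dO) (P : probability Omega R)
  (X : nat -> 'rV[R]_p -> nat -> Omega -> d.-tuple R)
  (X_law : forall n th i, (1 <= n)%N -> th \in ThetaK n -> (i < n)%N ->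
      has_law P (X n th i) (Pth th))
  (X_indep : forall n th, (1 <= n)%N -> th \in ThetaK n ->
      mutually_independent P n (X n th)) :
  forall eps : R, 0 < eps ->
    (P [set w | exists2 th, th \in ThetaK n &
        (eps < `| ginv (ecdf n eta (fun i => X n th i w)) alpha
                 - ginv (pushcdf (Pth th) eta) alpha |)%R])%E
      @[n --> \oo] --> 0%E.
Proof.
move=> eps eps0.
have [epsT /(_ eps eps0) [epsT0 epsT_gap]] := A3_unif.
pose e := Num.min (epsT eps) 1.
have e01 : 0 < e <= 1 by rewrite lt_min epsT0 ltr01 ge_min lexx orbT.
have e_le : e <= epsT eps by rewrite ge_min lexx.
pose r := expR (- (e ^+ 2 / 8)).
pose dev n th := [set w | (eps < `| ginv (ecdf n eta (fun i => X n th i w)) alpha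
                 - ginv (pushcdf (Pth th) eta) alpha |)%R].
have alpha01 : 0 < alpha <= 1 by case/andP: halpha => -> /ltW.
have dev_measurable n th : (0 < n)%N -> th \in ThetaK n -> measurable (dev n th).
  move=> n_gt0 thK; apply: measurable_quantile_deviation alpha01 => //.
  by move=> i; exact: X_law.
have dev_le n th : (0 < n)%N -> th \in ThetaK n ->
    (P (dev n th) <= (r ^+ n *+ 2)%:E)%E.
  move=> n_gt0 thK; have Th := ThetaK_sub n th thK.
  have := epsT_gap th Th; rewrite /= le_min => /andP[gap_right gap_left].
  apply: quantile_deviation_le => //; first by move=> i; exact: X_law.
  - exact: X_indep.
  - exact: A2.
  - exact: le_trans e_le gap_right.
  - exact: le_trans e_le gap_left.
rewrite (_ : (fun n => _) =
    fun n => P (\big[setU/set0]_(th <- ThetaK n) dev n th)); last first.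
  by apply/funext => n; rewrite -bigcup_seq.
apply: (measure_cvg0_le P _ (fun n => 2 * K * (n%:R `^ beta * r ^+ n))).
  exists 1%N => // n /= n_gt0; split.
    rewrite big_seq_cond; apply: bigsetU_measurable => th /andP[thK _].
    exact: dev_measurable.
  apply: le_trans (measure_bigsetU_seq_le P _ _ _
    (fun th => dev_measurable n th n_gt0) (fun th => dev_le n th n_gt0)) _.
  rewrite lee_fin -mulrnA -[leLHS]mulr_natr natrM.
  have := ThetaK_card n n_gt0; have : 0 <= r ^+ n by rewrite exprn_ge0 ?expR_ge0.
  nra.
rewrite -(mulr0 (2 * K)); apply: cvgMr; apply: cvg_powR_mul_expR => //.
by rewrite divr_gt0 // exprn_gt0; case/andP: e01.
Qed.
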